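(* Let $P^1,\dots,P^4\in\mathbb{R}^n$ be in general position, let $Q^0$ be the equidistant point from $P^1,\dots,P^4$ with barycentric coordinate $\boldsymbol\lambda^0$, and suppose $\lambda^0_1<0$, $\lambda^0_2<0$, $\lambda^0_3\ge0$, $\lambda^0_4\ge0$. Let $Q^{1(1)}=\pi(Q^0|L(P^2,P^3,P^4))$ and $Q^{1(2)}=\pi(Q^0|L(P^1,P^3,P^4))$, with barycentric coordinates $\boldsymbol\lambda^{1(1)},\boldsymbol\lambda^{1(2)}$ about $P^1,\dots,P^4$, and suppose $\lambda^{1(2)}_1<0$. Suppose further $\lambda^{1(1)}_2<0$, $\lambda^{1(1)}_3\ge0$, $\lambda^{1(1)}_4\ge0$, and let $Q^2=\pi(Q^{1(1)}|L(P^3,P^4))$. Then the center of the smallest enclosing circle of $P^1,\dots,P^4$ is $Q^\ast=Q^2$ and its radius is $d^\ast=d(P^3,Q^2)$.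
   Context: $d$ is the Euclidean distance. Points are in general position if $P^2-P^1,\dots,P^m-P^1$ are linearly independent. $L(S^1,\dots,S^r)$ is the affine subspace spanned by the points; $\pi(Q'|L)$ is the orthogonal projection onto the affine subspace $L$. The barycentric coordinate of $Q\in L(P^1,\dots,P^m)$ is the unique $\boldsymbol\lambda$ with $\sum_i\lambda_i=1$, $Q=\sum_i\lambda_iP^i$. The equidistant point is the unique $Q^0\in L(P^1,\dots,P^m)$ with all $d(P^i,Q^0)$ equal. The smallest enclosing circle has center $Q^\ast$ attaining $\min_Q\max_i d(P^i,Q)$ and radius $d^\ast$ equal to this minimum. *)

From HB Require Import structures.
From mathcomp Require Import all_boot all_order all_algebra.
Set Implicit Arguments. Unset Strict Implicit. Unset Printing Implicit Defensive.
Import Order.TTheory GRing.Theory Num.Theory.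
Local Open Scope ring_scope.

Section Geom.
Variables (R : rcfType) (n : nat).
Notation pt := 'rV[R]_n.

Definition dot (u v : pt) : R := \sum_(j < n) u 0 j * v 0 j.
Definition dist (x y : pt) : R := Num.sqrt (dot (x - y) (x - y)).

Definition general_position (S : seq pt) : Prop :=
  row_free (\matrix_(i < (size S).-1, j < n) (S`_i.+1 0 j - S`_0 0 j)).

Definition in_aff (S : seq pt) (x : pt) : Prop :=
  exists mu : seq R, [/\ size mu = size S,
    \sum_(i < size S) mu`_i = 1 &
    x = \sum_(i < size S) mu`_i *: S`_i].

Definition is_proj (S : seq pt) (Q X : pt) : Prop :=
  in_aff S X /\ forall Y, in_aff S Y -> dot (Q - X) (Y - X) = 0.

Definition is_bary4 (P1 P2 P3 P4 Q : pt) (l : 'I_4 -> R) : Prop :=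
  \sum_(i < 4) l i = 1 /\
  Q = l 0 *: P1 + l 1 *: P2 + l 2 *: P3 + l 3 *: P4.

Definition is_equidistant (S : seq pt) (Q : pt) : Prop :=
  in_aff S Q /\ forall i j, (i < size S)%N -> (j < size S)%N ->
    dist S`_i Q = dist S`_j Q.

Definition maxdist (S : seq pt) (Q : pt) : R :=
  \big[Num.max/0]_(x <- S) dist x Q.

Definition is_SEC_center (S : seq pt) (Q : pt) : Prop :=
  forall Q', maxdist S Q <= maxdist S Q'.

End Geom.

From mathcomp Require Import all_boot all_order all_algebra.
From mathcomp Require Import ring lra.
Import Order.TTheory GRing.Theory Num.Theory.
Local Open Scope ring_scope.
Set Implicit Arguments. Unset Strict Implicit.

(* Projecting a point that is equidistant from the points of S onto L(S) keeps
   it equidistant from them (Pythagoras), so Q^{1(1)} and Q^{1(2)} are the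
   circumcentres of P2P3P4 and P1P3P4, and Q^2 is the midpoint M of P3P4.
   If a vertex has a negative barycentric coordinate in the circumcentre of a
   triangle, it lies in the closed ball having the opposite side as diameter;
   hence lambda^{1(2)}_1 < 0 and lambda^{1(1)}_2 < 0 put P1 and P2 in the ball
   with diameter P3P4.  That ball is the unique smallest enclosing one, since
   max(|P3 - Q|, |P4 - Q|)^2 >= |P3 - M|^2 + |M - Q|^2 for every Q. *)

Section Dot.
Variables (R : rcfType) (n : nat).
Implicit Types u v w : 'rV[R]_n.

Lemma dotC u v : dot u v = dot v u.
Proof. by apply: eq_bigr => j _; rewrite mulrC. Qed.

Lemma dotDl u v w : dot (u + v) w = dot u w + dot v w.
Proof. by rewrite /dot -big_split; apply: eq_bigr => j _; rewrite !mxE mulrDl. Qed.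

Lemma dotZl (a : R) u w : dot (a *: u) w = a * dot u w.
Proof. by rewrite /dot mulr_sumr; apply: eq_bigr => j _; rewrite !mxE mulrA. Qed.

Lemma dotNl u w : dot (- u) w = - dot u w.
Proof. by rewrite -scaleN1r dotZl mulN1r. Qed.

Lemma dotBl u v w : dot (u - v) w = dot u w - dot v w.
Proof. by rewrite dotDl dotNl. Qed.

Lemma dotDr u v w : dot w (u + v) = dot w u + dot w v.
Proof. by rewrite dotC dotDl !(dotC w). Qed.

Lemma dotZr (a : R) u w : dot w (a *: u) = a * dot w u.
Proof. by rewrite dotC dotZl dotC. Qed.

Lemma dotNr u w : dot w (- u) = - dot w u.
Proof. by rewrite dotC dotNl dotC. Qed.

Lemma dotBr u v w : dot w (u - v) = dot w u - dot w v.
Proof. by rewrite dotDr dotNr. Qed.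

Lemma dotBB u v : dot (u - v) (u - v) = dot u u - 2 * dot u v + dot v v.
Proof. rewrite !(dotBl, dotBr) (dotC v u); ring. Qed.

Lemma dotDD u v : dot (u + v) (u + v) = dot u u + 2 * dot u v + dot v v.
Proof. rewrite !(dotDl, dotDr) (dotC v u); ring. Qed.

Lemma dot0r u : dot 0 u = 0.
Proof. by rewrite /dot big1 // => j _; rewrite mxE mul0r. Qed.

Lemma dotr0 u : dot u 0 = 0.
Proof. by rewrite dotC dot0r. Qed.

Lemma dotrr_ge0 u : 0 <= dot u u.
Proof. by apply: sumr_ge0 => j _; rewrite -expr2 sqr_ge0. Qed.

Lemma dotrr_eq0 u : (dot u u == 0) = (u == 0).
Proof.
apply/idP/eqP => [/eqP u0|->]; last by rewrite dot0r.
apply/rowP => j; rewrite mxE; apply/eqP; rewrite -sqrf_eq0 expr2.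
by move/psumr_eq0P: u0 => -> // i _; rewrite -expr2 sqr_ge0.
Qed.

Lemma dotrr_gt0 u : (0 < dot u u) = (u != 0).
Proof. by rewrite lt_def dotrr_ge0 dotrr_eq0 andbT. Qed.

Lemma dot_Cauchy_Schwarz u v : dot u v ^+ 2 <= dot u u * dot v v.
Proof.
have [->|v0] := eqVneq v 0.
  by rewrite dotr0 dot0r expr2 mul0r mulr0.
have vv_gt0 : 0 < dot v v by rewrite dotrr_gt0.
have := dotrr_ge0 (dot v v *: u - dot u v *: v).
rewrite !(dotBl, dotBr, dotZl, dotZr) (dotC v u); nra.
Qed.

End Dot.

Section Affine.
Variables (R : rcfType) (n : nat).
Implicit Types (A B C X Y : 'rV[R]_n) (S : seq 'rV[R]_n).

Lemma sum_ord4 (l : 'I_4 -> R) : \sum_(i < 4) l i = l 0 + l 1 + l 2 + l 3.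
Proof.
rewrite !big_ord_recl big_ord0 addr0 !addrA.
by congr (_ + _ + _ + _); congr l; apply/val_inj.
Qed.

Lemma in_aff_nth S i : (i < size S)%N -> in_aff S S`_i.
Proof.
move=> lt_i; set mu := [seq (j == i)%:R : R | j <- iota 0 (size S)].
have muE (j : 'I_(size S)) : mu`_j = (j == Ordinal lt_i)%:R.
  by rewrite (nth_map 0%N) ?size_iota // nth_iota // -val_eqE.
exists mu; split; first by rewrite size_map size_iota.
- rewrite (bigD1 (Ordinal lt_i)) // big1 => [|j /negbTE ji]; last by rewrite muE ji.
  by rewrite muE eqxx /= addr0.
- rewrite (bigD1 (Ordinal lt_i)) // big1 => [|j /negbTE ji]; last by rewrite muE ji scale0r.
  by rewrite muE eqxx /= scale1r addr0.
Qed.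

Lemma in_aff3_decomp A B C X : in_aff [:: A; B; C] X ->
  exists m0 m1 m2, m0 + m1 + m2 = 1 /\ X = m0 *: A + m1 *: B + m2 *: C.
Proof.
case=> -[|m0 [|m1 [|m2 [|? ?]]]] [] // _; rewrite !big_ord_recl !big_ord0 /= => s1 ->.
by exists m0, m1, m2; rewrite -s1 !addr0 !addrA.
Qed.

Lemma in_aff2_decomp A B X : in_aff [:: A; B] X ->
  exists m0 m1, m0 + m1 = 1 /\ X = m0 *: A + m1 *: B.
Proof.
case=> -[|m0 [|m1 [|? ?]]] [] // _; rewrite !big_ord_recl !big_ord0 /= => s1 ->.
by exists m0, m1; rewrite -s1 !addr0.
Qed.

Lemma is_proj_Pythagoras S Q X Y : is_proj S Q X -> in_aff S Y ->
  dot (Y - Q) (Y - Q) = dot (Y - X) (Y - X) + dot (Q - X) (Q - X).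
Proof.
case=> _ orth SY; have -> : Y - Q = (Y - X) - (Q - X) by rewrite opprB addrA subrK.
by rewrite dotBB (dotC (Y - X)) orth // mulr0 subr0.
Qed.

Lemma is_proj_equidistant S Q X i j : is_proj S Q X ->
  (i < size S)%N -> (j < size S)%N ->
  dot (S`_i - Q) (S`_i - Q) = dot (S`_j - Q) (S`_j - Q) ->
  dot (S`_i - X) (S`_i - X) = dot (S`_j - X) (S`_j - X).
Proof.
move=> pX lt_i lt_j.
rewrite (is_proj_Pythagoras pX (in_aff_nth lt_i)) (is_proj_Pythagoras pX (in_aff_nth lt_j)).
exact: addIr.
Qed.

Section GeneralPosition4.
Variables P1 P2 P3 P4 : 'rV[R]_n.
Hypothesis gp : general_position [:: P1; P2; P3; P4].

Lemma general_position4_indep (k1 k2 k3 k4 : R) :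
  k1 + k2 + k3 + k4 = 0 -> k1 *: P1 + k2 *: P2 + k3 *: P3 + k4 *: P4 = 0 ->
  [/\ k1 = 0, k2 = 0, k3 = 0 & k4 = 0].
Proof.
move=> ks0 kP0; have k1E : k1 = - (k2 + k3 + k4) by lra.
have /rowP k0 : \row_(i < 3) [:: k2; k3; k4]`_i = 0.
  apply: (row_free_inj (m := 1) gp); rewrite mul0mx; apply/rowP => j.
  move/rowP/(_ j): kP0; rewrite k1E !mxE !big_ord_recl big_ord0 /= !mxE /=.
  by move=> kP0; rewrite -[RHS]kP0; ring.
have := k0 (@Ordinal 3 0 isT); have := k0 (@Ordinal 3 1 isT).
have := k0 (@Ordinal 3 2 isT); rewrite !mxE /= => k4_0 k3_0 k2_0.
by split=> //; rewrite k1E k2_0 k3_0 k4_0 !addr0 oppr0.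
Qed.

Lemma general_position4_bary_uniq X (a b : 'I_4 -> R) :
  is_bary4 P1 P2 P3 P4 X a -> is_bary4 P1 P2 P3 P4 X b ->
  [/\ a 0 = b 0, a 1 = b 1, a 2 = b 2 & a 3 = b 3].
Proof.
rewrite /is_bary4 !sum_ord4 => -[sa Xa] [sb Xb].
have [||d1 d2 d3 d4] := @general_position4_indep (a 0 - b 0) (a 1 - b 1)
  (a 2 - b 2) (a 3 - b 3).
- lra.
- apply/rowP => j; move/rowP/(_ j): Xa; move/rowP/(_ j): Xb.
  by rewrite !mxE => Xbj Xaj; rewrite -(subrr (X 0 j)) {1}Xaj Xbj; ring.
by split; apply/eqP; rewrite -subr_eq0; apply/eqP.
Qed.

Lemma general_position4_neq34 : P3 != P4.
Proof.
apply/eqP => P34; have [||_ _ /eqP] := @general_position4_indep 0 0 1 (-1).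
- by rewrite !add0r addrN.
- by rewrite P34 !scale0r !add0r scaleN1r scale1r addrN.
by rewrite oner_eq0.
Qed.

Lemma face234_bary X l : is_bary4 P1 P2 P3 P4 X l -> in_aff [:: P2; P3; P4] X ->
  exists b c, l 1 + b + c = 1 /\ X = l 1 *: P2 + b *: P3 + c *: P4.
Proof.
move=> bX /in_aff3_decomp [m1 [m2 [m3 [m123 XE]]]].
have bX' : is_bary4 P1 P2 P3 P4 X (fun i => [:: 0; m1; m2; m3]`_i).
  by split; [rewrite sum_ord4 /= add0r | rewrite XE /= scale0r add0r].
have [_ -> _ _] := general_position4_bary_uniq bX bX'.
by exists m2, m3.
Qed.

Lemma face134_bary X l : is_bary4 P1 P2 P3 P4 X l -> in_aff [:: P1; P3; P4] X ->
  exists b c, l 0 + b + c = 1 /\ X = l 0 *: P1 + b *: P3 + c *: P4.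
Proof.
move=> bX /in_aff3_decomp [m0 [m2 [m3 [m023 XE]]]].
have bX' : is_bary4 P1 P2 P3 P4 X (fun i => [:: m0; 0; m2; m3]`_i).
  by split; [rewrite sum_ord4 /= addr0 | rewrite XE /= scale0r addr0].
have [-> _ _ _] := general_position4_bary_uniq bX bX'.
by exists m2, m3.
Qed.

End GeneralPosition4.
End Affine.

Section DiametralBall.
Variables (R : rcfType) (n : nat).
Implicit Types (A B C O Q X : 'rV[R]_n) (S : seq 'rV[R]_n).

Definition midpoint A B : 'rV[R]_n := 2^-1 *: (A + B).

Lemma subr_midpointl A B : A - midpoint A B = 2^-1 *: (A - B).
Proof. by apply/rowP => j; rewrite !mxE; field. Qed.

Lemma subr_midpointr A B : B - midpoint A B = - (A - midpoint A B).
Proof. by apply/rowP => j; rewrite !mxE; field. Qed.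

Lemma dot_midpoint_sym A B :
  dot (B - midpoint A B) (B - midpoint A B) = dot (A - midpoint A B) (A - midpoint A B).
Proof. by rewrite subr_midpointr dotNl dotNr opprK. Qed.

Lemma sqr_dist A B : dist A B ^+ 2 = dot (A - B) (A - B).
Proof. by rewrite sqr_sqrtr ?dotrr_ge0. Qed.

Lemma is_equidistant_dot S Q i j : is_equidistant S Q ->
  (i < size S)%N -> (j < size S)%N ->
  dot (S`_i - Q) (S`_i - Q) = dot (S`_j - Q) (S`_j - Q).
Proof. by case=> _ eqQ lt_i lt_j; rewrite -!sqr_dist (eqQ i j). Qed.

Lemma Apollonius A B Q :
  dot (A - Q) (A - Q) + dot (B - Q) (B - Q) =
  2 * dot (A - midpoint A B) (A - midpoint A B) +
  2 * dot (midpoint A B - Q) (midpoint A B - Q).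
Proof.
have -> : B - Q = (midpoint A B - Q) - (A - midpoint A B).
  by rewrite -subr_midpointr [RHS]addrC addrA subrK.
set M := midpoint A B; have -> : A - Q = (A - M) + (M - Q) by rewrite addrA subrK.
rewrite dotDD (dotBB (M - Q)) (dotC (A - M)); ring.
Qed.

Lemma midpoint_uniq A B X : A != B -> in_aff [:: A; B] X ->
  dot (A - X) (A - X) = dot (B - X) (B - X) -> X = midpoint A B.
Proof.
move=> AB /in_aff2_decomp [t0 [t [t01 ->]]]; have -> : t0 = 1 - t by lra.
have -> : A - ((1 - t) *: A + t *: B) = t *: (A - B).
  by apply/rowP => j; rewrite !mxE; ring.
have -> : B - ((1 - t) *: A + t *: B) = (t - 1) *: (A - B).
  by apply/rowP => j; rewrite !mxE; ring.
rewrite !(dotZl, dotZr) => eq_t.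
have AB_gt0 : 0 < dot (A - B) (A - B) by rewrite dotrr_gt0 subr_eq0.
have : (2 * t - 1) * dot (A - B) (A - B) = 0 by lra.
move/eqP; rewrite mulf_eq0 (gt_eqF AB_gt0) orbF subr_eq0 => /eqP t2.
have -> : t = 2^-1 by lra.
by apply/rowP => j; rewrite !mxE; field.
Qed.

(* The triangle with vertices w, e, -e, circumcentre z, and the midpoint of
   the side [e, -e] at the origin. *)
Lemma neg_coord_in_centred_ball (w e z : 'rV[R]_n) (a b : R) :
  z = a *: w + b *: e -> e != 0 -> a < 0 ->
  dot (w - z) (w - z) = dot (e - z) (e - z) ->
  dot (e - z) (e - z) = dot (- e - z) (- e - z) ->
  dot w w <= dot e e.
Proof.
move=> -> e0 a_lt0; rewrite !dotBB !(dotDl, dotDr, dotZl, dotZr, dotNl, dotNr) (dotC e w).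
have E_gt0 : 0 < dot e e by rewrite dotrr_gt0.
have CS := dot_Cauchy_Schwarz w e.
set x := dot w w in CS *; set y := dot w e in CS *; set E := dot e e in E_gt0 CS *.
move=> wz ez; have ye : a * y + b * E = 0 by lra.
have key : E * (x - E) = 2 * a * (x * E - y ^+ 2).
  have -> : x - E = 2 * (a * x + b * y) by lra.
  have -> : 2 * a * (x * E - y ^+ 2) = 2 * a * x * E - 2 * y * (a * y) by ring.
  have -> : a * y = - (b * E) by lra.
  ring.
have : E * (x - E) <= 0 by rewrite key mulr_le0_ge0 ?subr_ge0 // mulr_ge0_le0 ?ltW.
by rewrite pmulr_rle0 // subr_le0.
Qed.

Lemma neg_bary_in_diametral_ball A B C O (a b c : R) :
  a + b + c = 1 -> O = a *: A + b *: B + c *: C -> B != C -> a < 0 ->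
  dot (A - O) (A - O) = dot (B - O) (B - O) ->
  dot (B - O) (B - O) = dot (C - O) (C - O) ->
  dot (A - midpoint B C) (A - midpoint B C) <= dot (B - midpoint B C) (B - midpoint B C).
Proof.
move=> abc OE BC a_lt0; set M := midpoint B C.
have OM : O - M = a *: (A - M) + (b - c) *: (B - M).
  rewrite OE; have -> : a = 1 - b - c by lra.
  by apply/rowP => j; rewrite /M /midpoint !mxE; field.
have shift X : X - O = (X - M) - (O - M) by rewrite opprB addrA subrK.
rewrite (shift A) (shift B) (shift C) subr_midpointr.
apply: (neg_coord_in_centred_ball OM) => //.
by rewrite subr_midpointl scaler_eq0 negb_or invr_eq0 pnatr_eq0 subr_eq0.
Qed.

Lemma maxdist_ge S Q X : X \in S -> dist X Q <= maxdist S Q.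
Proof.
rewrite /maxdist; elim: S => // Y S IH; rewrite in_cons big_cons le_max.
by case/orP => [/eqP ->|/IH ->]; rewrite ?lexx ?orbT.
Qed.

Lemma maxdist_le S Q r : 0 <= r -> (forall X, X \in S -> dist X Q <= r) ->
  maxdist S Q <= r.
Proof.
rewrite /maxdist => r_ge0; elim: S => [|Y S IH] SQ; first by rewrite big_nil.
rewrite big_cons ge_max SQ ?mem_head // IH // => X XS.
by rewrite SQ // in_cons XS orbT.
Qed.

Lemma diametral_radius_le A B Q r : dist A Q <= r -> dist B Q <= r ->
  dist A (midpoint A B) ^+ 2 + dot (midpoint A B - Q) (midpoint A B - Q) <= r ^+ 2.
Proof.
move=> AQ BQ; have r_ge0 : 0 <= r := le_trans (sqrtr_ge0 _) AQ.
have AQ2 : dist A Q ^+ 2 <= r ^+ 2 by rewrite ler_pXn2r ?nnegrE ?sqrtr_ge0.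
have BQ2 : dist B Q ^+ 2 <= r ^+ 2 by rewrite ler_pXn2r ?nnegrE ?sqrtr_ge0.
have := Apollonius A B Q; rewrite -!sqr_dist in AQ2 BQ2 *; lra.
Qed.

Lemma diametral_ball_SEC S A B (M := midpoint A B) : A \in S -> B \in S ->
  (forall X, X \in S -> dot (X - M) (X - M) <= dot (A - M) (A - M)) ->
  [/\ is_SEC_center S M, forall Q, is_SEC_center S Q -> Q = M &
      maxdist S M = dist A M].
Proof.
move=> AS BS inS.
have maxM : maxdist S M = dist A M.
  apply/le_anti; rewrite maxdist_ge // maxdist_le ?sqrtr_ge0 // => X XS.
  by rewrite ler_sqrt ?dotrr_ge0 ?inS.
have lower Q : dist A M ^+ 2 + dot (M - Q) (M - Q) <= maxdist S Q ^+ 2.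
  exact: diametral_radius_le (maxdist_ge _ AS) (maxdist_ge _ BS).
split=> [Q|Q SEC_Q|//].
  rewrite maxM -(ler_pXn2r (isT : (0 < 2)%N)) ?nnegrE ?sqrtr_ge0 //.
    by have := lower Q; have := dotrr_ge0 (M - Q); lra.
  exact: le_trans (sqrtr_ge0 _) (maxdist_ge Q AS).
have QM : maxdist S Q <= dist A M by rewrite -maxM SEC_Q.
have : dot (M - Q) (M - Q) <= 0.
  have : maxdist S Q ^+ 2 <= dist A M ^+ 2.
    by rewrite ler_pXn2r ?nnegrE ?sqrtr_ge0 ?(le_trans (sqrtr_ge0 _) (maxdist_ge Q AS)).
  by have := lower Q; lra.
move=> MQ_le0; apply/esym/eqP.
by rewrite -subr_eq0 -dotrr_eq0 eq_le dotrr_ge0 MQ_le0.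
Qed.
End DiametralBall.

Theorem theorem10 (R : rcfType) (n : nat) (P1 P2 P3 P4 : 'rV[R]_n)
  (Q0 Q11 Q12 Q2 : 'rV[R]_n) (l0 l11 l12 : 'I_4 -> R) :
  general_position [:: P1; P2; P3; P4] ->
  is_equidistant [:: P1; P2; P3; P4] Q0 ->
  is_bary4 P1 P2 P3 P4 Q0 l0 ->
  l0 0 < 0 -> l0 1 < 0 -> 0 <= l0 2 -> 0 <= l0 3 ->
  is_proj [:: P2; P3; P4] Q0 Q11 ->
  is_proj [:: P1; P3; P4] Q0 Q12 ->
  is_bary4 P1 P2 P3 P4 Q11 l11 ->
  is_bary4 P1 P2 P3 P4 Q12 l12 ->
  l12 0 < 0 ->
  l11 1 < 0 -> 0 <= l11 2 -> 0 <= l11 3 ->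
  is_proj [:: P3; P4] Q11 Q2 ->
  [/\ is_SEC_center [:: P1; P2; P3; P4] Q2,
      (forall Q, is_SEC_center [:: P1; P2; P3; P4] Q -> Q = Q2) &
      maxdist [:: P1; P2; P3; P4] Q2 = dist P3 Q2].
Proof.
move=> gp eqQ0 _ _ _ _ _ pQ11 pQ12 bQ11 bQ12 l12_lt0 l11_lt0 _ _ pQ2.
have n34 := general_position4_neq34 gp.
have eq23Q11 := is_proj_equidistant (i := 0) (j := 1) pQ11 isT isT
  (is_equidistant_dot (i := 1) (j := 2) eqQ0 isT isT).
have eq34Q11 := is_proj_equidistant (i := 1) (j := 2) pQ11 isT isT
  (is_equidistant_dot (i := 2) (j := 3) eqQ0 isT isT).
have eq13Q12 := is_proj_equidistant (i := 0) (j := 1) pQ12 isT isT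
  (is_equidistant_dot (i := 0) (j := 2) eqQ0 isT isT).
have eq34Q12 := is_proj_equidistant (i := 1) (j := 2) pQ12 isT isT
  (is_equidistant_dot (i := 2) (j := 3) eqQ0 isT isT).
have eq34Q2 := is_proj_equidistant (i := 0) (j := 1) pQ2 isT isT eq34Q11.
have Q2E : Q2 = midpoint P3 P4 := midpoint_uniq n34 pQ2.1 eq34Q2.
have [b [c [s12 Q12E]]] := face134_bary gp bQ12 pQ12.1.
have [b' [c' [s11 Q11E]]] := face234_bary gp bQ11 pQ11.1.
rewrite Q2E; apply: diametral_ball_SEC; rewrite ?inE ?eqxx ?orbT // => X.
rewrite !inE => /or4P [] /eqP ->.
- exact: neg_bary_in_diametral_ball s12 Q12E n34 l12_lt0 eq13Q12 eq34Q12.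
- exact: neg_bary_in_diametral_ball s11 Q11E n34 l11_lt0 eq23Q11 eq34Q11.
- exact: lexx.
- by rewrite dot_midpoint_sym.
Qed.
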